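(* Let $G=(V,E)$ be an undirected graph on $n$ vertices with integral edge weights (capacities) in $[0,W]$, and let $s,t\in V$. Then every non-circular $s$-$t$ flow of value $f$ in $G$ satisfies $\sum_{e\in E} |\phi(e)| = O(n\sqrt{fW})$, where $\phi(e)$ is the amount of flow carried by edge $e$ and the implied constant is absolute.
   Context: An $s$-$t$ flow assigns to each edge a direction and an amount of flow not exceeding its weight, with flow conservation at every vertex other than $s,t$; its value $f$ is the net flow leaving $s$. The flow is non-circular if there is no directed cycle of edges each carrying positive flow. *)

From mathcomp Require Import all_boot all_order all_algebra.
Set Implicit Arguments. Unset Strict Implicit. Unset Printing Implicit Defensive.
Import Order.TTheory GRing.Theory Num.Theory.
Local Open Scope ring_scope.

(* An undirected simple graph on the finite vertex type V with integral edge
   weights is a symmetric capacity function cap : V -> V -> nat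
   (cap x y = 0 means "no edge / edge of weight 0"). *)
Definition sym_cap (V : finType) (cap : V -> V -> nat) : Prop :=
  forall x y, cap x y = cap y x.

(* A flow is encoded as a skew-symmetric function phi : phi x y > 0 means that
   the edge {x,y} is directed from x to y and carries phi x y units. *)
Definition is_st_flow (R : realFieldType) (V : finType) (cap : V -> V -> nat)
    (s t : V) (phi : V -> V -> R) : Prop :=
  [/\ forall x y, phi x y = - phi y x,
      forall x y, `|phi x y| <= (cap x y)%:R &
      forall v, v != s -> v != t -> \sum_(u : V) phi v u = 0].

Definition flow_value (R : realFieldType) (V : finType) (s : V)
    (phi : V -> V -> R) : R := \sum_(u : V) phi s u.

Definition noncircular (R : realFieldType) (V : finType) (phi : V -> V -> R)
    : Prop :=
  forall c : seq V, c != [::] -> ~~ cycle (fun x y => 0 < phi x y) c.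

(* sum over edges e of |phi(e)|: each unordered pair counted once *)
Definition flow_total (R : realFieldType) (V : finType) (phi : V -> V -> R) : R :=
  (\sum_(x : V) \sum_(y : V) `|phi x y|) / 2.

From mathcomp Require Import all_boot all_order all_algebra.
From mathcomp Require Import zify ring lra.
Set Implicit Arguments.
Unset Strict Implicit.
Unset Printing Implicit Defensive.
Import Order.TTheory GRing.Theory Num.Theory.
Local Open Scope ring_scope.

(* Acyclicity gives a numbering p : V -> [0, n) of the vertices that increases
   along every edge carrying positive flow.  Fix m.  A vertex has at most 2m
   "near" partners v with |p u - p v| <= m, each edge carrying at most W.
   On a "far" edge, |phi(u,v)| <= phi(u,v) (p v - p u) / (m+1), and by flow
   conservation the sum of phi(u,v) (p v - p u) over all ordered pairs is
   2 (p t - p s) f <= 2 n f.  Hence the total is at most n (m W + f / (m+1)),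
   and taking m^2 W <= f < (m+1)^2 W makes both terms at most sqrt (f W). *)

Lemma card_window_le (V : finType) (p : V -> nat) (lo hi : nat) :
  injective p -> (#|[pred v | lo <= p v < hi]| <= hi - lo)%N.
Proof.
move=> p_inj; rewrite cardE -(size_map p) -(size_iota lo (hi - lo)).
apply: uniq_leq_size; first by rewrite map_inj_uniq ?enum_uniq.
move=> _ /mapP [v + ->]; rewrite mem_enum inE mem_iota; lia.
Qed.

Lemma exists_rank_of_key (V : finType) (k : V -> nat) :
  injective k -> exists p : V -> nat,
    [/\ injective p, forall v, (p v < #|V|)%N &
        forall u v, (k u < k v)%N -> (p u < p v)%N].
Proof.
move=> k_inj; pose p v := #|[set w | (k w < k v)%N]|.
have p_mono u v : (k u < k v)%N -> (p u < p v)%N.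
  move=> kuv; apply: proper_card; apply/properP; split.
    by apply/subsetP => w; rewrite !inE => /ltn_trans; apply.
  by exists u; rewrite !inE ?kuv // ltnn.
exists p; split => [u v puv | v | //].
- apply: k_inj; case: (ltngtP (k u) (k v)) => // /p_mono; by rewrite puv ltnn.
- rewrite -cardsT; apply: proper_card; apply/properP.
  split; first exact: subsetT.
  by exists v; rewrite !inE ?ltnn.
Qed.

Section TopologicalRank.

Variables (V : finType) (e : rel V).
Hypothesis e_acyclic : forall c : seq V, c != [::] -> ~~ cycle e c.

Lemma card_ancestors_lt u v :
  e u v -> (#|[set w | connect e w u]| < #|[set w | connect e w v]|)%N.
Proof.
move=> euv; apply: proper_card; apply/properP; split.
  apply/subsetP => w; rewrite !inE => cwu.
  by apply: connect_trans cwu _; apply: connect1.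
exists v; rewrite !inE ?connect0 //.
apply/negP => /connectP [q pq lastq].
have /negP := @e_acyclic (v :: q) isT; apply.
by rewrite /= rcons_path pq -lastq.
Qed.

Lemma exists_topological_rank : exists p : V -> nat,
  [/\ injective p, forall v, (p v < #|V|)%N &
      forall u v, e u v -> (p u < p v)%N].
Proof.
pose a v := #|[set w | connect e w v]|.
pose k v := (a v * #|V| + enum_rank v)%N.
have k_inj : injective k.
  move=> u v /(congr1 (modn^~ #|V|)).
  by rewrite !modnMDl !modn_small ?ltn_ord // => /val_inj /enum_rank_inj.
have [p [p_inj p_lt p_mono]] := exists_rank_of_key k_inj.
exists p; split => // u v /card_ancestors_lt a_lt; apply: p_mono.
have : ((a u).+1 * #|V| <= a v * #|V|)%N by rewrite leq_mul2r a_lt orbT.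
rewrite mulSn.
have : (enum_rank u < #|V|)%N := ltn_ord _.
rewrite /k; lia.
Qed.

End TopologicalRank.

Section FlowPotential.

Variables (R : realFieldType) (V : finType) (s t : V) (phi : V -> V -> R).
Hypothesis phi_skew : forall x y, phi x y = - phi y x.
Hypothesis phi_conservation :
  forall v, v != s -> v != t -> \sum_u phi v u = 0.

Lemma sum_flow_eq0 : \sum_u \sum_v phi u v = 0.
Proof.
suff : \sum_u \sum_v phi u v = - \sum_u \sum_v phi u v by lra.
rewrite [LHS]exchange_big -sumrN; apply: eq_bigr => v _.
by rewrite -sumrN; apply: eq_bigr => u _.
Qed.

Lemma sum_flow_potential (P : V -> R) :
  \sum_u \sum_v phi u v * (P v - P u) = 2 * (P t - P s) * flow_value s phi.
Proof.
have inflow : \sum_u \sum_v phi u v * P v = - \sum_u P u * \sum_v phi u v.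
  rewrite exchange_big -sumrN; apply: eq_bigr => v _.
  rewrite mulr_sumr -sumrN; apply: eq_bigr => u _.
  by rewrite phi_skew; ring.
have outflow : \sum_u P u * \sum_v phi u v = (P s - P t) * flow_value s phi.
  have -> : \sum_u P u * \sum_v phi u v = \sum_u (P u - P t) * \sum_v phi u v.
    under [RHS]eq_bigr do rewrite mulrBl.
    by rewrite sumrB -mulr_sumr sum_flow_eq0 mulr0 subr0.
  rewrite (bigD1 s) //= [X in _ + X]big1 ?addr0 // => u us.
  have [->|ut] := eqVneq u t; first by rewrite subrr mul0r.
  by rewrite phi_conservation // mulr0.
have -> : \sum_u \sum_v phi u v * (P v - P u)
    = \sum_u \sum_v phi u v * P v - \sum_u P u * \sum_v phi u v.
  rewrite -sumrB; apply: eq_bigr => u _.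
  by rewrite mulr_sumr -sumrB; apply: eq_bigr => v _; ring.
by rewrite inflow outflow; ring.
Qed.

End FlowPotential.

Lemma ler_norm_mul_gap (R : numFieldType) (a d k : R) :
  0 < k -> 0 <= a * d -> k <= `|d| -> `|a| <= a * d / k.
Proof.
move=> k_gt0 ad_ge0 k_le_d; rewrite ler_pdivlMr // -(ger0_norm ad_ge0) normrM.
exact: ler_wpM2l.
Qed.

Section WindowBound.

Variables (R : realFieldType) (V : finType) (W : nat) (s t : V).
Variables (phi : V -> V -> R) (p : V -> nat) (m : nat).
Hypothesis phi_skew : forall x y, phi x y = - phi y x.
Hypothesis phi_conservation :
  forall v, v != s -> v != t -> \sum_u phi v u = 0.
Hypothesis phi_le_W : forall x y, `|phi x y| <= W%:R.
Hypothesis p_inj : injective p.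
Hypothesis p_lt_card : forall v, (p v < #|V|)%N.
Hypothesis p_mono : forall u v, 0 < phi u v -> (p u < p v)%N.
Hypothesis value_ge0 : 0 <= flow_value s phi.

Let P v : R := (p v)%:R.
Let near u := [pred v | (v != u) && (p u - m <= p v < p u + m.+1)%N].

Lemma flow_value_le : flow_value s phi <= #|V|%:R * W%:R.
Proof.
rewrite /flow_value mulrC mulr_natr -sumr_const.
by apply: ler_sum => u _; apply: le_trans (ler_norm _) (phi_le_W _ _).
Qed.

Lemma flow_mul_rank_gap_ge0 u v : 0 <= phi u v * (P v - P u).
Proof.
have rank_le x y : 0 < phi x y -> P x <= P y.
  by move/p_mono/ltnW; rewrite ler_nat.
have [phi_pos|phi_neg|<-] := ltrgtP 0 (phi u v); last by rewrite mul0r.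
  by rewrite mulr_ge0 ?subr_ge0 ?rank_le // ltW.
rewrite phi_skew oppr_lt0 in phi_neg.
by rewrite phi_skew mulNr -mulrN opprB mulr_ge0 ?subr_ge0 ?rank_le // ltW.
Qed.

Lemma card_near_le u : (#|near u| <= 2 * m)%N.
Proof.
pose window := [pred v | p u - m <= p v < p u + m.+1]%N.
have -> : #|near u| = #|[predD1 window & u]|.
  by apply: eq_card => v; rewrite !inE.
have := card_window_le (p u - m) (p u + m.+1) p_inj.
rewrite -/window (cardD1 u) inE /= leq_subr addnS ltnS leq_addr /=.
set c := #|_|; lia.
Qed.

Lemma norm_flow_far u v :
  v \notin near u -> `|phi u v| <= phi u v * (P v - P u) / m.+1%:R.
Proof.
have [<-|vu] := eqVneq v u.
  have phi_uu : phi v v = 0 by have := phi_skew v v; lra.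
  by rewrite phi_uu normr0 !mul0r.
rewrite inE /= vu /= => far.
apply: ler_norm_mul_gap; rewrite ?ltr0n ?flow_mul_rank_gap_ge0 //.
have [gap|gap] : (m.+1 + p v <= p u)%N \/ (m.+1 + p u <= p v)%N by lia.
  by rewrite ler_normr opprB; apply/orP; right; rewrite lerBrDr -natrD ler_nat.
by rewrite ler_normr; apply/orP; left; rewrite lerBrDr -natrD ler_nat.
Qed.

Lemma sum_norm_flow_le :
  \sum_u \sum_v `|phi u v|
    <= 2 * #|V|%:R * (m%:R * W%:R + flow_value s phi / m.+1%:R).
Proof.
have near_part u : \sum_(v | v \in near u) `|phi u v| <= (2 * m)%:R * W%:R.
  apply: le_trans (_ : \sum_(v in near u) W%:R <= _); first exact: ler_sum.
  rewrite sumr_const -[W%:R *+ _]mulr_natr mulrC.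
  by rewrite ler_wpM2r // ler_nat card_near_le.
have far_part u : \sum_(v | v \notin near u) `|phi u v|
    <= (\sum_v phi u v * (P v - P u)) / m.+1%:R.
  apply: le_trans (_ : \sum_(v | v \notin near u)
      phi u v * (P v - P u) / m.+1%:R <= _).
    by apply: ler_sum => v; exact: norm_flow_far.
  rewrite mulr_suml [leRHS](bigID (mem (near u))) /= lerDr sumr_ge0 // => v _.
  by rewrite divr_ge0 ?flow_mul_rank_gap_ge0.
have potential :
    \sum_u \sum_v phi u v * (P v - P u) <= 2 * #|V|%:R * flow_value s phi.
  have Pt_le : P t <= #|V|%:R by rewrite ler_nat ltnW.
  have Ps_ge0 : 0 <= P s by rewrite ler0n.
  rewrite (sum_flow_potential phi_skew phi_conservation).
  by rewrite ler_wpM2r // ler_wpM2l //; lra.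
apply: le_trans (_ : \sum_(u : V) ((2 * m)%:R * W%:R
    + (\sum_v phi u v * (P v - P u)) / m.+1%:R) <= _).
  by apply: ler_sum => u _; rewrite (bigID (mem (near u))) /= lerD.
rewrite big_split /= sumr_const -mulr_suml mulrDr.
apply: lerD; last by rewrite mulrA ler_pM2r ?invr_gt0 ?ltr0n.
by rewrite -mulr_natl natrM; lra.
Qed.

End WindowBound.

Lemma exists_nat_sqr_bracket (R : realFieldType) (f w : R) (n : nat) :
  0 <= f -> 0 < w -> f <= n%:R * w ->
  exists m : nat, (m ^ 2)%:R * w <= f < (m.+1 ^ 2)%:R * w.
Proof.
move=> f_ge0 w_gt0 f_le.
(* R need not be archimedean: the bound f <= n w is what bounds the m's. *)
pose below m := (m ^ 2)%:R * w <= f.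
have below0 : exists m, below m by exists 0%N; rewrite /below mul0r.
have below_le m : below m -> (m <= n)%N.
  move=> /le_trans /(_ f_le); rewrite ler_pM2r // ler_nat => sqr_le.
  by apply: leq_trans sqr_le; nia.
case: (ex_maxnP below0 below_le) => m below_m m_max.
exists m; apply/andP; split => //; rewrite ltNge; apply/negP => /m_max.
by rewrite ltnn.
Qed.

Lemma exists_balanced_window (R : rcfType) (f w : R) (n : nat) :
  0 <= f -> 0 <= w -> f <= n%:R * w ->
  exists m : nat, m%:R * w + f / m.+1%:R <= 2 * Num.sqrt (f * w).
Proof.
move=> f_ge0; rewrite le_eqVlt => /predU1P [<- | w_gt0] f_le.
  by exists 0%N; rewrite mulr0 in f_le; rewrite !mulr0 sqrtr0 mulr0 divr1; lra.
have [m /andP [sqr_le sqr_gt]] := exists_nat_sqr_bracket f_ge0 w_gt0 f_le.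
have le_sqrt a : 0 <= a -> a ^+ 2 <= f * w -> a <= Num.sqrt (f * w).
  move=> a_ge0 sqr_le_fw.
  by rewrite -(ger0_norm a_ge0) -sqrtr_sqr ler_sqrt // mulr_ge0 // ltW.
rewrite !natrX in sqr_le sqr_gt.
exists m; rewrite mulr2n mulrDl mul1r; apply: lerD; apply: le_sqrt.
- by rewrite mulr_ge0 ?ler0n ?ltW.
- nra.
- by rewrite divr_ge0.
- rewrite expr_div_n ler_pdivrMr ?exprn_gt0 ?ltr0n //; nra.
Qed.

Theorem mainTheorem12 (R : rcfType) :
  exists C : R, 0 < C /\
  forall (V : finType) (W : nat) (cap : V -> V -> nat) (s t : V)
         (phi : V -> V -> R),
    sym_cap cap ->
    (forall x y, (cap x y <= W)%N) ->
    is_st_flow cap s t phi ->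
    noncircular phi ->
    0 <= flow_value s phi ->
    flow_total phi <= C * (#|V|)%:R * Num.sqrt (flow_value s phi * W%:R).
Proof.
exists 2; split => // V W cap s t phi _ cap_le_W.
move=> [phi_skew phi_le_cap phi_conservation] acyclic value_ge0.
have phi_le_W x y : `|phi x y| <= W%:R.
  by apply: le_trans (phi_le_cap x y) _; rewrite ler_nat.
have [p [p_inj p_lt_card p_mono]] := exists_topological_rank acyclic.
have [m window_le] :=
  exists_balanced_window value_ge0 (ler0n R W) (flow_value_le s phi_le_W).
rewrite /flow_total ler_pdivrMr //.
apply: le_trans (sum_norm_flow_le m phi_skew phi_conservation phi_le_W
                   p_inj p_lt_card p_mono value_ge0) _.
rewrite -!mulrA; do 2!(apply: ler_wpM2l; first exact: ler0n).
by rewrite [_ * 2]mulrC.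
Qed.
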